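(* Let $T\in\mathcal{T}$ and $X\subseteq D_T$. (i) If $|X|\le 2$, then $\nu(T-X)=\nu(T)$. (ii) If $|X|=3$ and no vertex of $V(T)\setminus X$ has $3$ neighbors in $X$, then $\nu(T-X)=\nu(T)$. (iii) If $|X|=4$, no vertex of $V(T)\setminus X$ has $3$ neighbors in $X$, and there is no vertex $w\in V(T)\setminus X$ having two neighbors $u,v\in V(T)\setminus X$ with $X\subseteq N_T(u)\cup N_T(v)$, then $\nu(T-X)=\nu(T)$.
   Context: Gallai–Edmonds sets: for a graph $G$, $D_G$ is the set of vertices not covered by at least one maximum matching, $A_G=N_G(D_G)\setminus D_G$, $C_G=V(G)\setminus(A_G\cup D_G)$. $\nu$ denotes the matching number, $n(T)$ the number of vertices. $\mathcal{T}$ is the set of all trees $T$ such that every vertex of $A_T$ has degree at most $3$ in $T$ and $\nu(T)=\frac{n(T)-1}{3}$. *)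

(* A simple graph is a symmetric irreflexive relation e on a finType V. *)
From mathcomp Require Import all_boot.
Set Implicit Arguments. Unset Strict Implicit. Unset Printing Implicit Defensive.

Section Graph.
Variables (V : finType) (e : rel V).

Definition matching (S : {set V}) (M : {set {set V}}) : bool :=
  [forall f in M, exists u, exists v,
      [&& u \in S, v \in S, e u v & f == [set u; v]]] &&
  [forall f in M, forall g in M, (f != g) ==> [disjoint f & g]].

Definition nu (S : {set V}) : nat :=
  \max_(M : {set {set V}} | matching S M) #|M|.

Definition max_matching (S : {set V}) (M : {set {set V}}) : bool :=
  matching S M && (#|M| == nu S).

Definition covered (M : {set {set V}}) (v : V) : bool := [exists f in M, v \in f].

Definition Dset (S : {set V}) : {set V} :=
  [set v in S | [exists M, max_matching S M && ~~ covered M v]].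
Definition Aset (S : {set V}) : {set V} :=
  [set v in S | (v \notin Dset S) && [exists u in Dset S, e u v]].
Definition Cset (S : {set V}) : {set V} := S :\: (Aset S :|: Dset S).

Definition nbhd (v : V) : {set V} := [set u | e v u].
Definition deg (v : V) : nat := #|nbhd v|.

(* A tree: nonempty, connected, with exactly |V|-1 edges
   (edges counted as ordered pairs, hence the factor 2). *)
Definition is_tree : Prop :=
  0 < #|V| /\ (forall x y : V, connect e x y) /\
  #|[set p : V * V | e p.1 p.2]| = 2 * (#|V| - 1).

Definition in_calT : Prop :=
  is_tree /\ (forall v, v \in Aset setT -> deg v <= 3) /\ 3 * nu setT = #|V| - 1.

End Graph.

From mathcomp Require Import all_boot zify.
Set Implicit Arguments. Unset Strict Implicit. Unset Printing Implicit Defensive.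

(* In a tree the Gallai-Edmonds decomposition is rigid: alternating paths show
   that D is independent and that every maximum matching matches A into D.
   Counting the 2(n - 1) ordered edges of T between A, D and C against
   3 nu(T) = n - 1 then leaves no slack for T in calT: C is empty, every vertex
   of A has exactly three neighbours, all in D, and nu(T) = |A|.  Hence
   nu(T - X) = nu(T) as soon as A can be matched into D \ X, which by Hall's
   theorem means |N(B) \ X| >= |B| for all B included in A.  As T is a forest,
   |N(B)| >= 2|B| + 1 for nonempty B, which settles |B| >= 3 since |X| <= 4;
   the cases |B| = 1, 2 are exactly what the hypotheses on X rule out. *)

Section Hall.
Variables I T : finType.
Implicit Types (A B C : {set I}) (N : I -> {set T}).

Definition hall_condition A N :=
  forall B, B \subset A -> #|B| <= #|\bigcup_(i in B) N i|.

Lemma bigcup_setDr A N (K : {set T}) :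
  \bigcup_(i in A) (N i :\: K) = (\bigcup_(i in A) N i) :\: K.
Proof.
apply/setP=> x; rewrite inE; apply/bigcupP/andP.
  by case=> i iA; rewrite inE => /andP[xK xN]; split=> //; apply/bigcupP; exists i.
by case=> xK /bigcupP[i iA xN]; exists i; rewrite // inE xK.
Qed.

Lemma hall_condition_tight A B N :
  hall_condition A N -> B \subset A -> #|\bigcup_(i in B) N i| <= #|B| ->
  hall_condition (A :\: B) (fun i => N i :\: \bigcup_(i in B) N i).
Proof.
move=> hallA sBA tightB C sCAB; rewrite bigcup_setDr.
set NB := \bigcup_(i in B) N i; set NC := \bigcup_(i in C) N i.
have dCB : [disjoint C & B].
  rewrite disjoints_subset; apply/subsetP=> x /(subsetP sCAB).
  by rewrite !inE => /andP[].
have sCA : C \subset A by apply: subset_trans sCAB (subsetDl _ _).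
have := hallA (C :|: B); rewrite subUset sCA sBA bigcup_setU => /(_ isT).
have := cardsID NB (NC :|: NB).
rewrite setIUl setIid (setUidPr (subsetIr NC NB)) setDUl setDv setU0.
rewrite (cardsU C B) (disjoint_setI0 dCB) cards0 subn0 -/NB -/NC.
move: tightB; rewrite -/NB; lia.
Qed.

Lemma hall_condition_slack A N a t :
  (forall B, B \subset A -> B != set0 -> B != A -> #|B| < #|\bigcup_(i in B) N i|) ->
  a \in A -> hall_condition (A :\ a) (fun i => N i :\ t).
Proof.
move=> slackA aA C sCAa; rewrite bigcup_setDr.
have [-> | C0] := eqVneq C set0; first by rewrite cards0.
have sCA : C \subset A by apply: subset_trans sCAa (subsetDl _ _).
have CA : C != A.
  by apply/eqP=> CA; have := subsetP sCAa a; rewrite CA aA !inE eqxx => /(_ isT).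
have := slackA C sCA C0 CA; rewrite (cardsD1 t (\bigcup_(i in C) N i)); case: (_ \in _); lia.
Qed.

Lemma injective_glue A B (f g : I -> T) :
  {in B &, injective f} -> {in A :\: B &, injective g} ->
  {in A :\: B, forall i, g i \notin f @: B} ->
  {in A &, injective (fun i => if i \in B then f i else g i)}.
Proof.
move=> injf injg gf i j iA jA /=.
case: (boolP (i \in B)) => iB; case: (boolP (j \in B)) => jB.
- exact: injf.
- by move=> fg; have := gf j; rewrite inE jB jA -fg imset_f // => /(_ isT).
- by move=> fg; have := gf i; rewrite inE iB iA fg imset_f // => /(_ isT).
- by apply: injg; rewrite inE ?iB ?jB.
Qed.

Theorem hall_injection (t0 : T) A N : hall_condition A N ->
  exists f : I -> T, {in A &, injective f} /\ {in A, forall i, f i \in N i}.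
Proof.
have [n leAn] := ubnP #|A|; elim: n => // n IH in A N leAn *; move=> hallA.
have [-> | /set0Pn[a aA]] := eqVneq A set0.
  by exists (fun _ => t0); split=> i; rewrite inE.
pose glue B (f g : I -> T) i := if i \in B then f i else g i.
have [tight | slack] := boolP [exists B : {set I}, [&& B \subset A, B != set0, B != A &
           #|\bigcup_(i in B) N i| <= #|B|]].
- have /existsP[B /and4P[sBA B0 BA tightB]] := tight.
  have ltBA : #|B| < #|A| by apply: proper_card; rewrite properEneq BA.
  have [f [injf fN]] : exists f : I -> T, {in B &, injective f} /\ {in B, forall i, f i \in N i}.
    by apply: (IH B) => [|C sCB]; [lia | apply: hallA; apply: subset_trans sCB sBA].
  have [g [injg gN]] : exists g : I -> T, {in A :\: B &, injective g} /\
      {in A :\: B, forall i, g i \in N i :\: \bigcup_(i in B) N i}.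
    apply: IH (hall_condition_tight hallA sBA tightB).
    by rewrite cardsDS //; rewrite -card_gt0 in B0; lia.
  exists (glue B f g); split.
    apply: injective_glue => // i /gN; rewrite inE => /andP[gNB _].
    apply: contra gNB => /imsetP[j jB ->]; apply/bigcupP; exists j => //; exact: fN.
  move=> i iA; rewrite /glue; case: ifP => [/fN // | iB].
  by have := gN i; rewrite inE iB iA => /(_ isT) /setDP[].
- have slackA : forall B, B \subset A -> B != set0 -> B != A ->
      #|B| < #|\bigcup_(i in B) N i|.
    move=> B sBA B0 BA; rewrite ltnNge; apply: contraNN slack => tightB.
    by apply/existsP; exists B; rewrite sBA B0 BA.
  have /set0Pn[t ta] : \bigcup_(i in [set a]) N i != set0.
    by rewrite -card_gt0 (leq_trans _ (hallA _ _)) ?cards1 ?sub1set.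
  rewrite big_set1 in ta.
  have [g [injg gN]] : exists g : I -> T, {in A :\ a &, injective g} /\
      {in A :\ a, forall i, g i \in N i :\ t}.
    apply: IH (hall_condition_slack t slackA aA).
    by rewrite (cardsD1 a A) aA in leAn; lia.
  exists (glue [set a] (fun=> t) g); split.
    apply: injective_glue => [i j /set1P-> /set1P-> // | | i /gN].
      exact: injg.
    by rewrite imset_set1 !inE => /andP[].
  move=> i iA; rewrite /glue inE; case: eqP => [-> // | /eqP ia].
  by have := gN i; rewrite !inE ia iA => /(_ isT) /andP[].
Qed.
End Hall.

Section Matching.
Variables (V : finType) (e : rel V).
Hypotheses (e_sym : symmetric e) (e_irr : irreflexive e).
Implicit Types (S : {set V}) (M : {set {set V}}) (f g : {set V}) (u v x y : V).

Lemma matchingP S M : matching e S M ->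
  (forall f, f \in M -> exists u v, [/\ u \in S, v \in S, e u v & f = [set u; v]]) /\
  (forall f g, f \in M -> g \in M -> f != g -> [disjoint f & g]).
Proof.
case/andP=> /forall_inP h1 /forall_inP h2; split.
  by move=> f /h1 /existsP[u /existsP[v /and4P[uS vS euv /eqP ->]]]; exists u, v.
by move=> f g /h2 /forall_inP/(_ g) h gM; apply/implyP/h.
Qed.

Lemma matchingI S M :
  (forall f, f \in M -> exists u v, [/\ u \in S, v \in S, e u v & f = [set u; v]]) ->
  (forall f g, f \in M -> g \in M -> f != g -> [disjoint f & g]) -> matching e S M.
Proof.
move=> h1 h2; apply/andP; split; apply/forall_inP=> f fM.
  have [u [v [uS vS euv ->]]] := h1 f fM.
  by apply/existsP; exists u; apply/existsP; exists v; rewrite uS vS euv eqxx.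
by apply/forall_inP=> g gM; apply/implyP; apply: h2.
Qed.

Lemma matching0 S : matching e S set0.
Proof. by apply: matchingI => f; rewrite inE. Qed.

Lemma leq_card_nu S M : matching e S M -> #|M| <= nu e S.
Proof. exact: (@leq_bigmax_cond _ (matching e S) (fun M => #|M|)). Qed.

Lemma exists_max_matching S : exists M, max_matching e S M.
Proof.
have : 0 < #|[pred M : {set {set V}} | matching e S M]|.
  by apply/card_gt0P; exists set0; rewrite inE matching0.
case/(eq_bigmax_cond (fun M : {set {set V}} => #|M|))=> M; rewrite inE => hM nuM.
by exists M; rewrite /max_matching hM /nu -nuM eqxx.
Qed.

Lemma nu_subset S S' : S \subset S' -> nu e S <= nu e S'.
Proof.
move=> sSS'; have [M /andP[/matchingP[h1 h2] /eqP <-]] := exists_max_matching S.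
apply: leq_card_nu; apply: matchingI => // f /h1[u [v [uS vS euv ->]]].
by exists u, v; rewrite !(subsetP sSS').
Qed.

Lemma matching_eq S M f g x :
  matching e S M -> f \in M -> g \in M -> x \in f -> x \in g -> f = g.
Proof.
move=> /matchingP[_ h2] fM gM xf xg; apply/eqP/negPn/negP => fg.
by rewrite (disjointFr (h2 f g fM gM fg) xf) in xg.
Qed.

Lemma matching_partner S M f x : matching e S M -> f \in M -> x \in f ->
  exists y, [/\ f = [set x; y], e x y, x \in S & y \in S].
Proof.
move=> /matchingP[h1 _] /h1[u [v [uS vS euv ->]]]; rewrite !inE => /orP[]/eqP->.
  by exists v.
by exists u; rewrite setUC e_sym.
Qed.

Lemma coveredP M y : reflect (exists2 f, f \in M & y \in f) (covered M y).
Proof. by apply: (iffP exists_inP) => -[f]; exists f. Qed.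

Lemma coveredE M y : covered M y = (y \in cover M).
Proof. by apply/coveredP/bigcupP=> -[f]; exists f. Qed.

Lemma coveredU1 f M y : covered (f |: M) y = (y \in f) || covered M y.
Proof. by rewrite !coveredE /cover bigcup_setU big_set1 in_setU. Qed.

Lemma matchingD1 S M f : matching e S M -> matching e S (M :\ f).
Proof.
move=> /matchingP[h1 h2]; apply: matchingI => [g /setD1P[_ /h1] // | g h].
by move=> /setD1P[_ gM] /setD1P[_ hM]; apply: h2.
Qed.

Lemma coveredD1 S M f y : matching e S M -> f \in M ->
  covered (M :\ f) y = covered M y && (y \notin f).
Proof.
move=> hM fM; apply/coveredP/andP.
  case=> g /setD1P[gf gM] yg; split; first by apply/coveredP; exists g.
  by apply: contra gf => yf; rewrite (matching_eq hM gM fM yg yf).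
case=> /coveredP[g gM yg] yf; exists g => //; rewrite !inE gM andbT.
by apply: contraNneq yf => <-.
Qed.

Lemma matchingU1 S M u v : matching e S M -> u \in S -> v \in S -> e u v ->
  ~~ covered M u -> ~~ covered M v -> matching e S ([set u; v] |: M).
Proof.
move=> hM uS vS euv cu cv; have [h1 h2] := matchingP hM.
have disj g : g \in M -> [disjoint [set u; v] & g].
  move=> gM; rewrite disjoints_subset; apply/subsetP=> x /set2P[]-> ;
    rewrite inE; apply/negP=> xg.
    by move/coveredP: cu; apply; exists g.
  by move/coveredP: cv; apply; exists g.
apply: matchingI => [f /setU1P[-> | /h1 //] | f g]; first by exists u, v.
case/setU1P=> [-> | fM] /setU1P[-> | gM]; rewrite ?eqxx //.
- by move=> _; apply: disj.
- by move=> _; rewrite disjoint_sym; apply: disj.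
- exact: h2.
Qed.

Lemma card_cover_matching S M : matching e S M -> #|cover M| = 2 * #|M|.
Proof.
move=> hM; have [h1 h2] := matchingP hM.
have tM : trivIset M by apply/trivIsetP.
have [_] := leq_card_cover M; rewrite tM => /eqP ->.
rewrite mulnC -sum_nat_const; apply: eq_bigr => f /h1[u [v [_ _ euv ->]]].
by rewrite cards2; case: eqP euv => // ->; rewrite e_irr.
Qed.

Lemma max_matching_uncovered_edge S M u v : max_matching e S M ->
  u \in S -> v \in S -> e u v -> ~~ covered M u -> covered M v.
Proof.
case/andP=> hM /eqP cM uS vS euv cu; apply: contraT => cv.
have uvM : [set u; v] \notin M.
  by apply: contra cu => uvM; apply/coveredP; exists [set u; v]; rewrite ?set21.
have := leq_card_nu (matchingU1 hM uS vS euv cu cv).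
by rewrite cardsU1 uvM cM add1n ltnn.
Qed.

Lemma max_matching_swap S M f u v : max_matching e S M -> f \in M -> u \in f ->
  v \in S -> e u v -> ~~ covered M v -> max_matching e S ([set u; v] |: (M :\ f)).
Proof.
case/andP=> hM /eqP cM fM uf vS euv cv.
have [_ [_ _ uS _]] := matching_partner hM fM uf.
have cu : ~~ covered (M :\ f) u by rewrite (coveredD1 _ hM fM) uf andbF.
have cv' : ~~ covered (M :\ f) v by rewrite (coveredD1 _ hM fM) (negbTE cv).
have uvM : [set u; v] \notin M :\ f.
  by apply: contra cu => uvM; apply/coveredP; exists [set u; v]; rewrite ?set21.
by rewrite /max_matching (matchingU1 (matchingD1 f hM)) //= cardsU1 uvM -cM (cardsD1 f M) fM.
Qed.

End Matching.

Lemma covered_swap (V : finType) (e : rel V) S M f u v y :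
  matching e S M -> f \in M ->
  covered ([set u; v] |: (M :\ f)) y = (y \in [set u; v]) || covered M y && (y \notin f).
Proof. by move=> hM fM; rewrite coveredU1 (coveredD1 _ hM fM). Qed.

Section Arcs.
Variables (V : finType) (e : rel V).
Hypothesis e_sym : symmetric e.
Implicit Types X Y Z : {set V}.

Definition arcs X Y := [set p : V * V | [&& p.1 \in X, p.2 \in Y & e p.1 p.2]].

Lemma card_arcs_sym X Y : #|arcs X Y| = #|arcs Y X|.
Proof.
have swap_inj : injective (fun p : V * V => (p.2, p.1)) by move=> [a b] [c d] [-> ->].
rewrite -(card_imset _ swap_inj); apply: eq_card => -[x y].
apply/imsetP/idP => [[[a b]] | ]; rewrite !inE /=.
  by case/and3P=> aX bY eab [-> ->]; rewrite bY aX e_sym.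
by case/and3P=> xY yX exy; exists (y, x); rewrite //= !inE yX xY e_sym.
Qed.

Lemma card_arcsUr X Y Z : [disjoint Y & Z] ->
  #|arcs X (Y :|: Z)| = #|arcs X Y| + #|arcs X Z|.
Proof.
move=> dYZ; rewrite -cardsUI.
have -> : arcs X Y :&: arcs X Z = set0.
  apply/setP=> -[x y]; rewrite !inE /=.
  by case yY: (y \in Y); rewrite ?(disjointFr dYZ yY) ?andbF.
rewrite cards0 addn0; apply: eq_card => -[x y]; rewrite !inE /=.
by case: (x \in X); case: (e x y); rewrite ?andbT ?andbF.
Qed.

Lemma card_arcsUl X Y Z : [disjoint Y & Z] ->
  #|arcs (Y :|: Z) X| = #|arcs Y X| + #|arcs Z X|.
Proof. by move=> dYZ; rewrite !(card_arcs_sym _ X) card_arcsUr. Qed.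

Lemma card_arcsT X : #|arcs X setT| = \sum_(x in X) deg e x.
Proof.
rewrite -sum1dep_card (eq_bigl (fun p => (p.1 \in X) && e p.1 p.2)) => [|[x y]];
  last by rewrite !inE.
rewrite -(pair_big_dep (fun x => x \in X) e (fun _ _ => 1)) /=.
by apply: eq_bigr => x _; rewrite sum1dep_card.
Qed.

End Arcs.

Section ParentToward.
Variables (V : finType) (e : rel V) (R : {set V}).
Hypotheses (e_sym : symmetric e) (reachR : forall y, exists2 z, z \in R & connect e y z).

Definition reaches_in y k := [exists s : k.-tuple V, path e y s && (last y s \in R)].

Lemma reaches_in_some y : exists k, reaches_in y k.
Proof.
have [z zR /connectP[p pp lp]] := reachR y.
by exists (size p); apply/existsP; exists (in_tuple p); rewrite /= pp -lp zR.
Qed.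

Definition dist y := ex_minn (reaches_in_some y).

(* The successor of [y] on a shortest path from [y] into [R]. *)
Definition parent y := head y (odflt [tuple of nseq (dist y) y]
  [pick s : (dist y).-tuple V | path e y s && (last y s \in R)]).

Lemma parentP y : y \notin R -> e y (parent y) /\ dist (parent y) < dist y.
Proof.
rewrite /parent /dist; case: ex_minnP => k /existsP[s0 hs0] _ yR.
case: pickP => [s /andP[ps ls] | /(_ s0)]; last by rewrite hs0.
case: s ps ls => -[|x s] //= sz; first by rewrite (negbTE yR).
case/andP=> exy ps ls; split=> //; case: ex_minnP => m _ mmin.
have /mmin : reaches_in x (size s) by apply/existsP; exists (in_tuple s); rewrite /= ps ls.
by rewrite -(eqP sz).
Qed.

Lemma card_arcs_outside : 2 * #|~: R| + #|arcs e R R| <= #|arcs e setT setT|.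
Proof.
set up := [set (y, parent y) | y in ~: R]; set down := [set (parent y, y) | y in ~: R].
have [cup cdown] : #|up| = #|~: R| /\ #|down| = #|~: R|.
  by split; apply: card_imset => a b [].
have d_up_down : [disjoint up & down].
  rewrite -setI_eq0; apply/eqP/setP=> -[a b]; rewrite !inE.
  apply/andP=> -[/imsetP[y yR [-> ->]] /imsetP[y' y'R [E1 E2]]].
  move: yR y'R; rewrite !inE => /parentP[_ +] /parentP[_].
  by rewrite -E1 E2; lia.
have d_R : [disjoint up :|: down & arcs e R R].
  rewrite -setI_eq0; apply/eqP/setP=> -[a b]; rewrite !inE.
  apply/andP=> -[/orP[] /imsetP[y yR [-> ->]]]; rewrite inE in yR;
    by rewrite /= (negbTE yR) ?andbF.
have := leq_card_setU up down; rewrite d_up_down => -[_ /eqP cU].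
have := leq_card_setU (up :|: down) (arcs e R R); rewrite d_R => -[_ /eqP cUR].
rewrite mul2n -addnn -{1}cup -{1}cdown -cU -cUR; apply: subset_leq_card.
apply/subsetP=> -[a b]; rewrite !inE /= => /orP[/orP[] /imsetP[y yR [-> ->]] | /and3P[] //].
  by rewrite inE in yR; have [-> _] := parentP yR.
by rewrite inE in yR; have [eyp _] := parentP yR; rewrite e_sym.
Qed.

End ParentToward.

Section Tree.
Variables (V : finType) (e : rel V).
Hypotheses (e_sym : symmetric e) (tree : is_tree e).

Lemma card_arcs_tree_all : #|arcs e setT setT| = 2 * (#|V| - 1).
Proof.
by case: tree => _ [_ <-]; apply: eq_card => p; rewrite !inE.
Qed.

Lemma card_arcs_tree W : #|arcs e W W| <= 2 * #|W| - 2.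
Proof.
have [-> | /set0Pn[z zW]] := eqVneq W set0.
  by rewrite (_ : arcs e _ _ = set0) ?cards0 //; apply/setP=> p; rewrite !inE.
have reachW y : exists2 z, z \in W & connect e y z by exists z => //; case: tree => _ [].
have := card_arcs_outside e_sym reachW; rewrite card_arcs_tree_all cardsCs setCK.
have := max_card (mem W); rewrite -cardsE; lia.
Qed.

Lemma next_next_neq (T : eqType) (c : seq T) w :
  uniq c -> 3 <= size c -> w \in c -> next c (next c w) != w.
Proof.
move=> uc sc wc; have [i q E] := rot_to wc.
rewrite -(next_rot i uc (next c w)) -(next_rot i uc w) E.
have : uniq (w :: q) by rewrite -E rot_uniq.
have : 3 <= size (w :: q) by rewrite -E size_rot.
case: q {E} => [|a [|b q']] //= _.
rewrite !inE !eqxx /=; case/andP=> /norP[wa /norP[wb _]] /andP[/norP[ab _] _].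
by rewrite (eq_sym a w) (negbTE wa) eq_sym.
Qed.

Lemma tree_cycle_small c : uniq c -> cycle e c -> size c < 3.
Proof.
move=> uc cyc; rewrite ltnNge; apply/negP=> sc.
set W := [set y in c].
set fwd := [set (w, next c w) | w in W]; set bwd := [set (next c w, w) | w in W].
have [cfwd cbwd] : #|fwd| = #|W| /\ #|bwd| = #|W| by split; apply: card_imset => a b [].
have d : [disjoint fwd & bwd].
  rewrite -setI_eq0; apply/eqP/setP=> -[a b]; rewrite !inE.
  apply/andP=> -[/imsetP[y yW [-> ->]] /imsetP[y' _ [E1 E2]]].
  by rewrite inE in yW; have := next_next_neq uc sc yW; rewrite E2 -E1 eqxx.
have W0 : 0 < #|W| by rewrite cardsE (card_uniqP uc) (leq_trans _ sc).
have := leq_card_setU fwd bwd; rewrite d => -[_ /eqP cU].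
have : #|fwd :|: bwd| <= #|arcs e W W|.
  apply: subset_leq_card; apply/subsetP=> -[a b].
  case/setUP=> /imsetP[y yW [-> ->]]; rewrite inE in yW; rewrite !inE /= mem_next yW /=.
    exact: next_cycle.
  by rewrite e_sym; apply: next_cycle.
have := card_arcs_tree W; lia.
Qed.

Lemma tree_path_cycle_small x s : uniq (x :: s) -> path e x s -> e (last x s) x -> size s < 2.
Proof.
move=> us ps ls; have := @tree_cycle_small (x :: s) us; rewrite /= rcons_path ps ls.
by move=> /(_ isT).
Qed.

Lemma tree_path_chord x s y : uniq (x :: s) -> path e x s -> y \in s -> e y x ->
  y = head x s.
Proof.
move=> us ps ys eyx; case/splitPr: ys us ps => [[// | a p1] p2] us ps.
rewrite -cat_rcons -cat_cons cat_uniq in us; rewrite -cat_rcons cat_path in ps.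
case/andP: us => us _; case/andP: ps => ps _.
by have := tree_path_cycle_small us ps; rewrite last_rcons eyx size_rcons => /(_ isT).
Qed.

Lemma tree_path_detour x s p a : uniq (x :: s) -> path e x s -> p \in s ->
  e p a -> e a x -> a \in x :: s.
Proof.
move=> us ps ps_ epa eax; case/splitPr: ps_ us ps => p1 p2 us ps.
apply: contraT => anin.
have := @tree_path_cycle_small x (p1 ++ [:: p; a]); rewrite last_cat /= eax size_cat addn2.
apply=> //; last first.
  by move: ps; rewrite !cat_path /= epa andbT => /andP[-> /andP[-> _]].
move: anin; rewrite inE mem_cat inE !negb_or => /and4P[ax ap1 ap _].
move: us; rewrite /= !cat_uniq /= !mem_cat !inE !negb_or.
case/and5P=> /and3P[xp1 xp _] up1 /andP[pp1 _] _ _.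
by rewrite xp1 xp (eq_sym x a) ax up1 pp1 ap1 (eq_sym p a) ap.
Qed.
End Tree.

Lemma card_setD_exchange (T : finType) (A B : {set T}) x y :
  x \in B -> x \notin A -> y \in A -> #|(B :\ x :|: [set y]) :\: A| < #|B :\: A|.
Proof.
move=> xB xA yA; rewrite (cardsD1 x (B :\: A)) inE xA xB add1n ltnS.
apply: subset_leq_card; apply/subsetP=> z; rewrite !inE.
case: (z =P y) => [-> | _]; first by rewrite yA.
by rewrite orbF => /andP[-> /andP[-> ->]].
Qed.

Section AlternatingPath.
Variables (V : finType) (e : rel V).
Hypotheses (e_sym : symmetric e) (e_irr : irreflexive e) (tree : is_tree e).
Implicit Types (M : {set {set V}}) (f g : {set V}).

(* [M''] is obtained from [M] by switching along the alternating path
   [v :: w :: q], whose first edge [{v, w}] is in [M]: [v] becomes uncovered,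
   and nothing changes away from the path. *)
Definition releasing_path M v w q M'' : Prop :=
  [/\ [set v; w] \in M, path e v (w :: q), uniq (v :: w :: q),
      max_matching e setT M'' &
      [/\ ~~ covered M'' v,
          forall f, f \in M -> [disjoint f & [set x in v :: w :: q]] -> f \in M'' &
          forall y, y \notin v :: w :: q -> ~~ covered M y -> ~~ covered M'' y]].

Lemma releasing_path_step M M0 v w1 w2 q :
  max_matching e setT M0 -> [set v; w1] \in M -> [set v; w1] \in M0 ->
  e v w1 -> e w1 w2 -> ~~ covered M0 w2 -> path e w2 q -> uniq [:: v, w1, w2 & q] ->
  (forall f, f \in M -> [disjoint f & [set x in w2 :: q]] -> f \in M0) ->
  (forall y, y \notin w2 :: q -> ~~ covered M y -> ~~ covered M0 y) ->
  releasing_path M v w1 (w2 :: q) ([set w1; w2] |: (M0 :\ [set v; w1])).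
Proof.
move=> mM0 fM fM0 evw1 ew1w2 ncw2 pq uq keep0 free0; have [hM0 _] := andP mM0.
have := uq; rewrite /= !inE !negb_or => /and4P[/and3P[vw1 vw2 _] /andP[w1w2 _] _ _].
split=> //; first by rewrite /= evw1 ew1w2.
  by apply: max_matching_swap; rewrite ?set22.
split.
- by rewrite (covered_swap _ _ _ hM0 fM0) set21 andbF orbF !inE negb_or vw1.
- move=> g gM dg; rewrite in_setU1 in_setD1; apply/orP; right; apply/andP; split.
    by apply/eqP=> Eg; move: dg; rewrite Eg => /disjointFr/(_ (set21 v w1)); rewrite inE mem_head.
  apply: (keep0 g gM); rewrite disjoints_subset; apply/subsetP=> x xg.
  by have := disjointFr dg xg; rewrite !inE => /norP[_ /norP[_ ->]].
- move=> y; rewrite in_cons negb_or => /andP[_]; rewrite in_cons negb_or => /andP[yw1 yq] ncy.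
  have yw2 : y != w2 by apply: contraNneq yq => ->; apply: mem_head.
  rewrite (covered_swap _ _ _ hM0 fM0) !inE (negbTE yw1) (negbTE yw2).
  by rewrite (negbTE (free0 y yq ncy)).
Qed.

Lemma exists_releasing_path_from M M' v :
  max_matching e setT M -> max_matching e setT M' ->
  ~~ covered M' v -> covered M v -> exists w q M'', releasing_path M v w q M''.
Proof.
(* Induction on |M' \ M|: trading the M'-edge {w1, w2} for the M-edge {v, w1}
   gives a maximum matching closer to M that misses w2; its releasing path
   from w2 is then prolonged by v, w1. *)
move=> mM; have [k ck] := ubnP #|M' :\: M|.
elim: k M' v ck => // k IH M' v ck mM' cv' /coveredP[f fM vf].
have [hM _] := andP mM; have [hM' _] := andP mM'.
have [w1 [Ef evw1 _ _]] := matching_partner e_sym hM fM vf; rewrite {}Ef in fM.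
have /coveredP[f' f'M' w1f'] : covered M' w1.
  by apply: (max_matching_uncovered_edge mM') cv'; rewrite ?inE.
have [w2 [Ef' ew1w2 _ _]] := matching_partner e_sym hM' f'M' w1f'; rewrite {}Ef' in f'M'.
have w2v : w2 != v.
  by apply: contraNneq cv' => <-; apply/coveredP; exists [set w1; w2]; rewrite ?set22.
have vw1 : v != w1 by apply: contraTneq evw1 => ->; rewrite e_irr.
have w1w2 : w1 != w2 by apply: contraTneq ew1w2 => ->; rewrite e_irr.
have w2_vw1 : w2 \notin [set v; w1] by rewrite !inE negb_or w2v eq_sym.
have [cw2 | ncw2] := boolP (covered M w2); last first.
  exists w1, [:: w2], ([set w1; w2] |: (M :\ [set v; w1])).
  apply: releasing_path_step => //.
  by rewrite /= !inE negb_or vw1 eq_sym w2v w1w2.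
set M'1 := [set v; w1] |: (M' :\ [set w1; w2]).
have mM'1 : max_matching e setT M'1.
  by rewrite /M'1 (setUC [set v]); apply: max_matching_swap; rewrite ?set21 // e_sym.
have f'M : [set w1; w2] \notin M.
  apply: contra w2_vw1 => f'M.
  by rewrite -(matching_eq hM f'M fM (set21 w1 w2) (set22 v w1)) set22.
have ck1 : #|M'1 :\: M| < k.
  by rewrite /M'1 (setUC [set [set v; w1]]); exact: leq_trans (card_setD_exchange f'M' f'M fM) ck.
have ncw2' : ~~ covered M'1 w2.
  by rewrite (covered_swap _ _ _ hM' f'M') set22 andbF orbF !inE negb_or w2v eq_sym w1w2.
have [w3 [q [MQ [w2w3M pQ uQ mMQ [ncQ keepQ freeQ]]]]] := IH M'1 w2 ck1 mM'1 ncw2' cw2.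
have w1nQ : w1 \notin w2 :: w3 :: q.
  rewrite inE negb_or w1w2; apply/negP=> /(tree_path_chord e_sym tree uQ pQ) /(_ ew1w2) /= w1w3.
  have w1_w2w3 : w1 \in [set w2; w3] by rewrite w1w3 set22.
  by have := set21 w2 w3; rewrite (matching_eq hM w2w3M fM w1_w2w3 (set22 v w1)) (negbTE w2_vw1).
have vnQ : v \notin w2 :: w3 :: q.
  rewrite inE negb_or eq_sym w2v; apply: contra w1nQ => vQ.
  exact: (tree_path_detour e_sym tree uQ pQ vQ).
exists w1, [:: w2, w3 & q], ([set w1; w2] |: (MQ :\ [set v; w1])).
apply: releasing_path_step => //.
- apply: (keepQ _ fM); rewrite disjoints_subset; apply/subsetP=> x.
  by rewrite !inE => /orP[]/eqP->; [exact: vnQ | exact: w1nQ].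
- by rewrite cons_uniq in_cons negb_or vw1 vnQ cons_uniq w1nQ uQ.
Qed.
End AlternatingPath.

Section GallaiEdmondsTree.
Variables (V : finType) (e : rel V).
Hypotheses (e_sym : symmetric e) (e_irr : irreflexive e) (tree : is_tree e).
Local Notation D := (Dset e setT).
Local Notation A := (Aset e setT).

Lemma DsetP v : reflect (exists2 M, max_matching e setT M & ~~ covered M v) (v \in D).
Proof.
rewrite inE in_setT /=; apply: (iffP existsP) => [[M /andP[]] | [M]]; first by exists M.
by exists M; apply/andP.
Qed.

Lemma Aset_notin_Dset a : a \in A -> a \notin D.
Proof. by rewrite inE => /and3P[]. Qed.

Lemma exists_releasing_path M v : max_matching e setT M -> v \in D -> covered M v ->
  exists w q M'', releasing_path e M v w q M''.
Proof.
move=> mM /DsetP[M' mM' cv'] cv.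
exact: (exists_releasing_path_from e_sym e_irr tree mM mM' cv' cv).
Qed.

Lemma Dset_indep u x : u \in D -> x \in D -> ~~ e u x.
Proof.
move=> /DsetP[M mM cu] xD; apply/negP=> eux.
have [cx | ncx] := boolP (covered M x); last first.
  by have := max_matching_uncovered_edge mM (in_setT u) (in_setT x) eux cu; rewrite (negbTE ncx).
have [w [q [M'' [wM pq uq mM'' [ncx'' _ freeq]]]]] := exists_releasing_path mM xD cx.
have [uP | unP] := boolP (u \in x :: w :: q).
  move: uP; rewrite in_cons => /orP[/eqP ux | uP]; first by move: eux; rewrite ux e_irr.
  have uw := tree_path_chord e_sym tree uq pq uP eux.
  by move/coveredP: cu; apply; exists [set x; w]; rewrite //= uw set22.
have := max_matching_uncovered_edge mM'' (in_setT u) (in_setT x) eux (freeq u unP cu).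
by rewrite (negbTE ncx'').
Qed.

Lemma Aset_partner M a : max_matching e setT M -> a \in A ->
  exists2 p, p \in D & [set a; p] \in M.
Proof.
move=> mM aA; have [hM _] := andP mM; have aD := Aset_notin_Dset aA.
move: aA; rewrite inE => /and3P[_ _ /exists_inP[d dD eda]]; have ead : e a d by rewrite e_sym.
have /coveredP[f fM af] : covered M a.
  by apply: contraR aD => nca; apply/DsetP; exists M.
have [p [Ef eap _ _]] := matching_partner e_sym hM fM af; subst f.
exists p => //; have [-> // | pd] := eqVneq p d.
have pa : p != a by apply: contraTneq eap => ->; rewrite e_irr.
have freed M1 : max_matching e setT M1 -> [set a; p] \in M1 -> ~~ covered M1 d -> p \in D.
  move=> mM1 fM1 cd1; apply/DsetP; exists ([set a; d] |: (M1 :\ [set a; p])).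
    exact: max_matching_swap.
  rewrite (covered_swap _ _ _ (proj1 (andP mM1)) fM1) set22 andbF orbF !inE negb_or pa.
  by rewrite pd.
have [cd | ncd] := boolP (covered M d); last exact: freed ncd.
have [w [q [M'' [dwM pq uq mM'' [ncd'' keepq _]]]]] := exists_releasing_path mM dD cd.
have anP : a \notin [:: d, w & q].
  rewrite in_cons negb_or; apply/andP; split; first by apply: contraNneq aD => ->.
  apply/negP=> aP; have aw : a = w := tree_path_chord e_sym tree uq pq aP ead.
  have a_dw : a \in [set d; w] by rewrite aw set22.
  have := set22 a p; rewrite -(matching_eq hM dwM fM a_dw (set21 a p)) !inE (negbTE pd).
  by rewrite -aw (negbTE pa).
have pnP : p \notin [:: d, w & q].
  rewrite in_cons negb_or pd; apply: contra anP => pP.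
  by apply: (tree_path_detour e_sym tree uq pq pP); rewrite // e_sym.
apply: freed mM'' _ ncd''; apply: (keepq _ fM); rewrite disjoints_subset.
by apply/subsetP=> x; rewrite !inE => /orP[]/eqP->; [exact: anP | exact: pnP].
Qed.

Lemma card_Aset_uncovered M : max_matching e setT M -> #|A| + #|~: cover M| <= #|D|.
Proof.
move=> mM; have [hM _] := andP mM.
pose partner a := odflt a [pick p | [set a; p] \in M].
have partnerP a : a \in A -> partner a \in D /\ [set a; partner a] \in M.
  move=> aA; have [p pD pM] := Aset_partner mM aA.
  rewrite /partner; case: pickP => [q qM | /(_ p)]; last by rewrite pM.
  suff -> : q = p by [].
  have Eqp := matching_eq hM qM pM (set21 a q) (set21 a p).
  have : q \in [set a; p] by rewrite -Eqp set22.
  rewrite !inE => /orP[/eqP qa | /eqP //]; have : p \in [set a; q] by rewrite Eqp set22.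
  by rewrite qa setUid inE => /eqP pa; move: (Aset_notin_Dset aA); rewrite -pa pD.
have partner_inj : {in A &, injective partner}.
  move=> a b aA bA ab; have [paD paM] := partnerP a aA; have [pbD pbM] := partnerP b bA.
  have := set21 a (partner a); rewrite (matching_eq hM paM pbM (set22 a _) _) ?ab ?set22 //.
  by rewrite !inE => /orP[/eqP // | /eqP ab']; move: (Aset_notin_Dset aA); rewrite ab' -ab paD.
have sAD : partner @: A \subset D :&: cover M.
  apply/subsetP=> _ /imsetP[a aA ->]; have [paD paM] := partnerP a aA.
  by rewrite inE paD; apply/bigcupP; exists [set a; partner a]; rewrite ?set22.
have sUD : ~: cover M \subset D :\: cover M.
  apply/subsetP=> y; rewrite inE -coveredE => ncy.
  by rewrite inE -coveredE ncy /=; apply/DsetP; exists M.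
rewrite -(cardsID (cover M) D) -(card_in_imset partner_inj).
by apply: leq_add; apply: subset_leq_card.
Qed.
End GallaiEdmondsTree.

Section GallaiEdmondsPartition.
Variables (V : finType) (e : rel V).
Hypothesis e_sym : symmetric e.
Local Notation D := (Dset e setT).
Local Notation A := (Aset e setT).
Local Notation C := (Cset e setT).

Lemma Aset_Dset_disjoint : [disjoint A & D].
Proof. by rewrite disjoints_subset; apply/subsetP=> a aA; rewrite inE Aset_notin_Dset. Qed.

Lemma Aset_Dset_Cset_partition : setT = A :|: D :|: C.
Proof. by apply/setP=> x; rewrite /Cset in_setT in_setU in_setD in_setT andbT orbN. Qed.

Lemma Aset_Dset_Cset_disjoint : [disjoint A :|: D & C].
Proof. by rewrite disjoint_sym disjoints_subset /Cset setTD. Qed.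

Lemma card_Aset_Dset_Cset : #|A| + #|D| + #|C| = #|V|.
Proof.
rewrite -cardsT -(cardsID (A :|: D) setT) setTI cardsU.
by rewrite (disjoint_setI0 Aset_Dset_disjoint) cards0 subn0.
Qed.

Lemma Cset_Dset_nonadj c d : c \in C -> d \in D -> ~~ e c d.
Proof.
rewrite /Cset in_setD in_setU in_setT andbT => /norP[cA cD] dD; apply: contra cA => ecd.
by rewrite [c \in A]inE in_setT cD; apply/exists_inP; exists d; rewrite // e_sym.
Qed.
End GallaiEdmondsPartition.

Section ClassT.
Variables (V : finType) (e : rel V).
Hypotheses (e_sym : symmetric e) (e_irr : irreflexive e).
Local Notation D := (Dset e setT).
Local Notation A := (Aset e setT).
Local Notation C := (Cset e setT).

Lemma nu_lower_bound : is_tree e -> 2 * #|A| + #|C| <= 2 * nu e setT.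
Proof.
move=> tree; have [M mM] := exists_max_matching e setT; have [hM /eqP cM] := andP mM.
have := card_Aset_uncovered e_sym e_irr tree mM; have := card_cover_matching e_irr hM.
have := cardsC (cover M); have := card_Aset_Dset_Cset e; lia.
Qed.

Hypothesis calT : in_calT e.

Lemma in_calT_counting :
  [/\ C = set0, arcs e A A = set0, \sum_(a in A) deg e a = 3 * #|A| & nu e setT = #|A|].
Proof.
case: calT => tree [degA nuT]; have lb := nu_lower_bound tree.
have no_arcs (X Y : {set V}) : (forall x y, x \in X -> y \in Y -> ~~ e x y) -> #|arcs e X Y| = 0.
  move=> nXY; apply/eqP; rewrite cards_eq0; apply/eqP/setP=> -[x y]; rewrite !inE /=.
  by apply/and3P=> -[xX yY]; apply/negP/nXY.
have aDD := no_arcs D D (Dset_indep e_sym e_irr tree).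
have aCD := no_arcs C D (Cset_Dset_nonadj e_sym).
have aDC : #|arcs e D C| = 0 by rewrite card_arcs_sym.
set P := A :|: D :|: C.
have split_r X : #|arcs e X P| = #|arcs e X A| + #|arcs e X D| + #|arcs e X C|.
  by rewrite !card_arcsUr ?Aset_Dset_Cset_disjoint ?Aset_Dset_disjoint.
have split_l X : #|arcs e P X| = #|arcs e A X| + #|arcs e D X| + #|arcs e C X|.
  by rewrite !card_arcsUl ?Aset_Dset_Cset_disjoint ?Aset_Dset_disjoint.
have sum_degA : \sum_(a in A) deg e a = #|arcs e A P|.
  by rewrite /P -Aset_Dset_Cset_partition card_arcsT.
have le_sum_degA : \sum_(a in A) deg e a <= 3 * #|A|.
  by rewrite mulnC -sum_nat_const; apply: leq_sum.
have total : #|arcs e P P| = 6 * nu e setT.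
  by rewrite /P -(Aset_Dset_Cset_partition e) (card_arcs_tree_all tree); lia.
move: total sum_degA; rewrite split_l !split_r (card_arcs_sym e_sym D A) (card_arcs_sym e_sym C A).
move=> total sum_degA; have aCC := card_arcs_tree e_sym tree C.
have cC : #|C| = 0 by lia.
split; [by apply/eqP; rewrite -cards_eq0 cC | | lia | lia].
by apply/eqP; rewrite -cards_eq0; apply/eqP; lia.
Qed.

Lemma Aset_nbhd_Dset a y : a \in A -> e a y -> y \in D.
Proof.
case: in_calT_counting => C0 AA0 _ _ aA eay.
have : y \in A :|: D :|: C by rewrite -Aset_Dset_Cset_partition.
rewrite C0 setU0 in_setU => /orP[yA | //].
suff : (a, y) \in arcs e A A by rewrite AA0 inE.
by rewrite inE /= aA yA eay.
Qed.

Lemma Aset_deg a : a \in A -> deg e a = 3.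
Proof.
case: in_calT_counting => _ _ sum_deg _; case: calT => _ [degA _].
move=> aA; apply/eqP; rewrite eqn_leq degA //= leqNgt; apply/negP=> lt3.
have : \sum_(x in A :\ a) deg e x <= 3 * #|A :\ a|.
  by rewrite mulnC -sum_nat_const; apply: leq_sum => x /setD1P[_ /degA].
by rewrite (big_setD1 a aA) /= (cardsD1 a A) aA add1n in sum_deg; lia.
Qed.

Lemma nu_in_calT : nu e setT = #|A|.
Proof. by case: in_calT_counting. Qed.
End ClassT.

Section DeficientRemoval.
Variables (V : finType) (e : rel V).
Hypotheses (e_sym : symmetric e) (e_irr : irreflexive e) (calT : in_calT e).
Local Notation D := (Dset e setT).
Local Notation A := (Aset e setT).
Local Notation N B := (\bigcup_(a in B) nbhd e a).

Lemma card_nbhd_Aset (B : {set V}) : B \subset A -> B != set0 -> 2 * #|B| < #|N B|.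
Proof.
move=> sBA B0; have [tree _] := calT.
have dBN : [disjoint B & N B].
  rewrite disjoints_subset; apply/subsetP=> y /(subsetP sBA) yA; rewrite inE.
  apply/bigcupP=> -[a /(subsetP sBA) aA]; rewrite inE => /(Aset_nbhd_Dset e_sym e_irr calT aA).
  by rewrite (negbTE (Aset_notin_Dset yA)).
have arcsB : #|arcs e B (N B)| = 3 * #|B|.
  rewrite -[RHS]mulnC -sum_nat_const.
  have -> : arcs e B (N B) = arcs e B setT.
    apply/setP=> -[a y]; rewrite !inE /=; case aB: (a \in B) => //=.
    by case eay: (e a y); rewrite ?andbF // andbT; apply/bigcupP; exists a; rewrite ?inE.
  by rewrite card_arcsT; apply: eq_bigr => a /(subsetP sBA) /(Aset_deg e_sym e_irr calT).
have := card_arcs_tree e_sym tree (B :|: N B).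
rewrite card_arcsUl // !card_arcsUr // (card_arcs_sym e_sym (N B) B) arcsB.
rewrite cardsU (disjoint_setI0 dBN) cards0 subn0; rewrite -card_gt0 in B0; lia.
Qed.

Lemma Aset_notin_subset_Dset (X : {set V}) a : X \subset D -> a \in A -> a \notin X.
Proof. by move=> XD /Aset_notin_Dset; apply: contra => /(subsetP XD). Qed.

Section HallCondition.
Variable X : {set V}.
Hypotheses (XD : X \subset D) (X_le4 : #|X| <= 4)
  (X_nbhd : 3 <= #|X| -> forall w, w \notin X -> #|X :&: nbhd e w| < 3)
  (X_pair : #|X| = 4 -> ~ exists w u v, [&& w \notin X, u \notin X, v \notin X, u != v,
                          e w u, e w v & X \subset nbhd e u :|: nbhd e v]).

Lemma card_nbhd_setD_Aset1 a : a \in A -> 0 < #|nbhd e a :\: X|.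
Proof.
move=> aA; have := Aset_deg e_sym e_irr calT aA; rewrite /deg => deg3.
rewrite cardsD setIC deg3 subn_gt0.
have [X3 | X2] := leqP 3 #|X|; first exact: X_nbhd (Aset_notin_subset_Dset XD aA).
by apply: leq_ltn_trans X2; apply: subset_leq_card; apply: subsetIl.
Qed.

Lemma card_nbhd_setD_Aset2 a1 a2 : a1 \in A -> a2 \in A -> a1 != a2 ->
  2 <= #|(nbhd e a1 :|: nbhd e a2) :\: X|.
Proof.
move=> a1A a2A a12; set N1 := nbhd e a1; set N2 := nbhd e a2.
have [a1X a2X] := conj (Aset_notin_subset_Dset XD a1A) (Aset_notin_subset_Dset XD a2A).
have c1 : #|N1| = 3 := Aset_deg e_sym e_irr calT a1A.
have c2 : #|N2| = 3 := Aset_deg e_sym e_irr calT a2A.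
have B0 : [set a1; a2] != set0 by apply/set0Pn; exists a1; rewrite set21.
have := card_nbhd_Aset _ B0; rewrite bigcup_setU !big_set1 cards2 a12 subUset !sub1set a1A a2A.
move=> /(_ isT); rewrite -/N1 -/N2 => big.
rewrite cardsD; have NX := subset_leq_card (subsetIr (N1 :|: N2) X).
have [X3 | X4] := ltnP #|X| 4; first lia.
have {}X4 : #|X| = 4 by lia.
rewrite leqNgt; apply/negP=> small; apply: (X_pair X4).
have XN : (N1 :|: N2) :&: X = X by apply/eqP; rewrite eqEcard subsetIr X4; lia.
rewrite XN in small.
have cI : #|N1 :&: N2| = 1 by have := cardsUI N1 N2; lia.
have /card_gt0P[w wI] : 0 < #|N1 :&: N2| by rewrite cI.
have wX : w \notin X.
  apply/negP=> wX; have X3 : 3 <= #|X| by rewrite X4.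
  have := X_nbhd X3 a1X; have := X_nbhd X3 a2X; rewrite -/N1 -/N2.
  have := cardsUI (X :&: N1) (X :&: N2); rewrite -setIUr setIC XN X4.
  have : 0 < #|(X :&: N1) :&: (X :&: N2)|.
    by apply/card_gt0P; exists w; rewrite !inE wX; rewrite !inE in wI.
  lia.
exists w, a1, a2; rewrite wX a1X a2X a12 -XN subsetIl andbT /=.
by move: wI; rewrite !inE (e_sym w a1) (e_sym w a2).
Qed.

Lemma hall_condition_setD_nbhd : hall_condition A (fun a => nbhd e a :\: X).
Proof.
move=> B sBA; rewrite bigcup_setDr.
have [-> | B0] := eqVneq B set0; first by rewrite cards0.
have [B3 | B2] := ltnP 2 #|B|.
  rewrite cardsD; have := subset_leq_card (subsetIr (N B) X).
  have := card_nbhd_Aset sBA B0; lia.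
have /orP[/cards1P[a EB] | /cards2P[a1 [a2 [a12 EB]]]] : (#|B| == 1) || (#|B| == 2).
  by rewrite -card_gt0 in B0; case: #|B| B0 B2 => [|[|[|]]].
  by move: sBA; rewrite EB cards1 big_set1 sub1set; apply: card_nbhd_setD_Aset1.
move: sBA; rewrite EB subUset !sub1set cards2 a12 bigcup_setU !big_set1 => /andP[a1A a2A].
exact: card_nbhd_setD_Aset2.
Qed.
End HallCondition.

Lemma nu_setC_Dset (X : {set V}) : X \subset D ->
  hall_condition A (fun a => nbhd e a :\: X) -> nu e (~: X) = nu e setT.
Proof.
move=> XD hallX; have [[/card_gt0P[t0 _] _] _] := calT.
have [f [f_inj fN]] := hall_injection t0 hallX.
have fP a : a \in A -> [/\ e a (f a), f a \notin X & f a \in D].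
  move=> aA; have := fN a aA; rewrite inE => /andP[fX]; rewrite inE => eaf.
  by split=> //; apply: Aset_nbhd_Dset eaf.
have edge_inj : {in A &, injective (fun a => [set a; f a])}.
  move=> a b aA bA Eab; have := set21 a (f a); rewrite Eab !inE => /orP[/eqP // | /eqP afb].
  by have [_ _ fbD] := fP b bA; move: (Aset_notin_Dset aA); rewrite afb fbD.
have hM : matching e (~: X) [set [set a; f a] | a in A].
  apply: matchingI => [_ /imsetP[a aA ->] | _ _ /imsetP[a aA ->] /imsetP[b bA ->] ab].
    by have [eaf fX _] := fP a aA; exists a, (f a); rewrite !inE fX Aset_notin_subset_Dset.
  have {}ab : a != b by apply: contraNneq ab => ->.
  have [_ _ faD] := fP a aA; have [_ _ fbD] := fP b bA.
  rewrite disjoints_subset; apply/subsetP=> x /set2P[]->; rewrite !inE negb_or.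
    by rewrite ab; apply: contraTneq fbD => <-; rewrite Aset_notin_Dset.
  apply/andP; split; first by apply: contraTneq faD => ->; rewrite Aset_notin_Dset.
  by apply: contra ab => /eqP/(f_inj _ _ aA bA)->.
apply/eqP; rewrite eqn_leq nu_subset ?subsetT //= (nu_in_calT e_sym e_irr calT).
by have := leq_card_nu hM; rewrite card_in_imset.
Qed.
End DeficientRemoval.

Unset Implicit Arguments.

Theorem lemma2 (V : finType) (e : rel V)
  (e_sym : symmetric e) (e_irr : irreflexive e)
  (HT : in_calT e) (X : {set V}) (HX : X \subset Dset e setT) :
  (#|X| <= 2 -> nu e (~: X) = nu e setT) /\
  (#|X| = 3 ->
     (forall w, w \notin X -> #|X :&: nbhd e w| < 3) ->
     nu e (~: X) = nu e setT) /\
  (#|X| = 4 ->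
     (forall w, w \notin X -> #|X :&: nbhd e w| < 3) ->
     ~ (exists w u v, [&& w \notin X, u \notin X, v \notin X, u != v,
                          e w u, e w v & X \subset nbhd e u :|: nbhd e v]) ->
     nu e (~: X) = nu e setT).
Proof.
have main := nu_setC_Dset e_sym e_irr HT HX.
have hall := hall_condition_setD_nbhd e_sym e_irr HT HX.
split; [|split].
- by move=> X2; apply/main/hall=> [| X3 | X4]; [lia | exfalso; lia | exfalso; lia].
- by move=> X3 Xn; apply/main/hall=> [| _ | X4] //; [lia | exfalso; lia].
- by move=> X4 Xn Xp; apply/main/hall=> //; lia.
Qed.
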